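(* Each of the sets $\mathcal{L}_{SE}=\{(M,q)\mid SE[U](M)>q\}$, $\mathcal{L}_{ME}=\{(M,q)\mid ME[U](M)>q\}$ and $\mathcal{L}_{GE}=\{(M,q)\mid GE[U](M)>q\}$ is a liveness hyperproperty. That is, for each of them and for every rational number $q$, the set of programs $M$ with $(M,q)$ in it is a liveness hyperproperty.
   Context: Stores $\sigma$ map program variables to values. There is a designated high-security input variable $H$ and a low-security output variable $O$. A trace is a sequence of stores. $\Psi_{\mathrm{inf}}$ and $\Psi_{\mathrm{fin}}$ denote the sets of infinite and of finite traces. For a finite trace $t$, $t\circ t'$ is the concatenation of $t$ and $t'$. A set of traces is deterministic if any two of its traces that start with stores having the same value of $H$ are equal. A program is a deterministic set $M\subseteq\Psi_{\mathrm{inf}}$. Its input domain $\mathbb{H}_M=\{\sigma_0(H)\mid \sigma_0;\sigma_1;\dots\in M\}$ is finite and nonempty. Input domains are not bounded in size: the values of $H$ range over an unbounded set. For $h\in\mathbb{H}_M$, $M(h)$ is the output trace $(\sigma_1(O),\sigma_2(O),\dots)$ of the unique trace $\sigma_0;\sigma_1;\dots$ of $M$ with $\sigma_0(H)=h$. Output traces may contain the symbol $\bot$, which denotes termination. Observation is termination-insensitive: $M(h)=o$ means that for all $i$, $o_i=\bot$ or $M(h)_i=\bot$ or $M(h)_i=o_i$. Given a distribution $\mu$ on $\mathbb{H}_M$, put $\mu(O=o)=\sum_{h:\,M(h)=o}\mu(H=h)$, with joint and conditional probabilities induced accordingly. $U$ denotes the uniform distribution on $\mathbb{H}_M$. The following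 are defined, with logarithms base 2. - Shannon entropy: $\mathcal{H}[\mu](X)=\sum_x\mu(X=x)\log\frac1{\mu(X=x)}$. - Conditional Shannon entropy: $\mathcal{H}[\mu](Y|Z)=\sum_z\mu(Z=z)\sum_y\mu(Y=y|Z=z)\log\frac1{\mu(Y=y|Z=z)}$. - $SE[\mu](M)=\mathcal{H}[\mu](H)-\mathcal{H}[\mu](H|O)$. - $\mathcal{V}[\mu](X)=\max_x\mu(X=x)$ and $\mathcal{V}[\mu](X|Y)=\sum_y\mu(Y=y)\max_x\mu(X=x|Y=y)$. - $ME[\mu](M)=\log\frac1{\mathcal{V}[\mu](H)}-\log\frac1{\mathcal{V}[\mu](H|O)}$. - Guessing entropy: $\mathcal{G}[\mu](X)=\sum_{1\le i\le m}i\,\mu(X=x_i)$, where $x_1,\dots,x_m$ enumerates the sample space with $\mu(X=x_i)$ non-increasing in $i$. - $\mathcal{G}[\mu](X|Y)=\sum_y\mu(Y=y)\sum_i i\,\mu(X=x_i|Y=y)$, with the ordering chosen for each $y$ so that these conditional probabilities are non-increasing. - $GE[\mu](M)=\mathcal{G}[\mu](H)-\mathcal{G}[\mu](H|O)$. Let $\mathit{Prop}$ be the set of programs and $\mathit{Obs}$ the set of finite sets of finite traces that are deterministic. For $S\in\mathit{Obs}$ and $T\in\mathit{Prop}$, $S\le T$ iff for every $t\in S$ there is $t'$ with $t\circ t'\in T$. A hyperproperty is a set $P\subseteq\mathit{Prop}$. $P$ is a liveness hyperproperty iff for every $S\in\mathit{Obs}$ there is $S'\in\mathit{Prop}$ with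 $S\le S'$ and $S'\in P$. A set $\mathcal{P}$ of pairs (program, rational) is called a liveness hyperproperty iff for every rational $q$ the set $\{M\mid(M,q)\in\mathcal{P}\}$ is a liveness hyperproperty. *)

From HB Require Import structures.
From mathcomp Require Import all_boot all_order all_algebra.
From mathcomp Require Import all_classical all_reals.
From mathcomp Require Import exp.
Set Implicit Arguments. Unset Strict Implicit. Unset Printing Implicit Defensive.
Import Order.TTheory GRing.Theory Num.Theory.
Local Open Scope classical_set_scope.
Local Open Scope ring_scope.

(* Program variables are natural numbers; H is variable 0, O is variable 1.
   Values are [option nat]: [None] is the termination symbol bot, [Some n]
   ordinary values (an unbounded set). *)
Definition var := nat.
Definition val := option nat.
Definition Hv : var := 0%N.
Definition Ov : var := 1%N.
Definition store := var -> val.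
Definition itrace := nat -> store.
Definition ftrace := seq store.
Definition otrace := nat -> val.

Definition tcat (t : ftrace) (t' : itrace) : itrace :=
  fun i => nth (t' (i - size t)%N) t i.

Definition det_inf (M : set itrace) : Prop :=
  forall t1 t2, M t1 -> M t2 -> t1 0%N Hv = t2 0%N Hv -> t1 = t2.

Definition det_fin (S : set ftrace) : Prop :=
  forall t1 t2 s1 s2 r1 r2, S t1 -> S t2 -> t1 = s1 :: r1 -> t2 = s2 :: r2 ->
    s1 Hv = s2 Hv -> t1 = t2.

Definition indom (M : set itrace) : set val := [set t 0%N Hv | t in M].

Definition is_program (M : set itrace) : Prop :=
  det_inf M /\ finite_set (indom M) /\ indom M !=set0.

Definition is_obs (S : set ftrace) : Prop := finite_set S /\ det_fin S.

Definition obs_le (S : set ftrace) (T : set itrace) : Prop :=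
  forall t, S t -> exists t', T (tcat t t').

Definition liveness (P : set itrace -> Prop) : Prop :=
  forall S, is_obs S -> exists S', is_program S' /\ obs_le S S' /\ P S'.

Definition liveness_q (PP : set itrace -> rat -> Prop) : Prop :=
  forall q : rat, liveness (fun M => PP M q).

Definition out (t : itrace) : otrace := fun i => t i.+1 Ov.

(* termination-insensitive equality  "M(h) = o" *)
Definition ti_eq (a o : otrace) : Prop :=
  forall i, o i = None \/ a i = None \/ a i = o i.

Definition outputs (M : set itrace) (h : val) (o : otrace) : Prop :=
  exists t, M t /\ t 0%N Hv = h /\ ti_eq (out t) o.

(* sample space of O: the output traces of M *)
Definition outset (M : set itrace) : set otrace := [set out t | t in M].

Section Measures.
Variable R : realType.

Definition log2 (x : R) : R := ln x / ln 2.

Definition ind (P : Prop) : R := (asbool P)%:R.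

(* uniform distribution U on the input domain *)
Definition ncard (M : set itrace) : R := \sum_(h \in indom M) (1 : R).
Definition pH (M : set itrace) (h : val) : R := 1 / ncard M.
Definition pHO (M : set itrace) (h : val) (o : otrace) : R :=
  ind (outputs M h o) * pH M h.
Definition pO (M : set itrace) (o : otrace) : R :=
  \sum_(h \in indom M) pHO M h o.
Definition pHgO (M : set itrace) (h : val) (o : otrace) : R :=
  pHO M h o / pO M o.

Definition shannonH (M : set itrace) : R :=
  \sum_(h \in indom M) pH M h * log2 (1 / pH M h).
Definition shannonHgO (M : set itrace) : R :=
  \sum_(o \in outset M) pO M o *
    \sum_(h \in indom M) pHgO M h o * log2 (1 / pHgO M h o).
Definition SE (M : set itrace) : R := shannonH M - shannonHgO M.

Definition vulnH (M : set itrace) : R := sup [set pH M h | h in indom M].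
Definition vulnHgO (M : set itrace) : R :=
  \sum_(o \in outset M) pO M o * sup [set pHgO M h o | h in indom M].
Definition ME (M : set itrace) : R :=
  log2 (1 / vulnH M) - log2 (1 / vulnHgO M).

(* guessing entropy of a distribution p over a finite sample space A:
   sum_i i * p(x_i) for an enumeration x_1..x_m of A with p(x_i)
   non-increasing (the value does not depend on which such enumeration). *)
Definition guess_enum (T : choiceType) (A : set T) (p : T -> R) : set (seq T) :=
  [set s | uniq s /\ [set` s] = A /\ sorted (fun x y => p y <= p x) s].
Definition guessG (T : choiceType) (A : set T) (p : T -> R) : R :=
  let s := xget [::] (guess_enum A p) in
  \sum_(k <- zip (iota 1 (size s)) s) (k.1)%:R * p k.2.

Definition guessH (M : set itrace) : R := guessG (indom M) (pH M).
Definition guessHgO (M : set itrace) : R :=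
  \sum_(o \in outset M) pO M o * guessG (indom M) (fun h => pHgO M h o).
Definition GE (M : set itrace) : R := guessH M - guessHgO M.

End Measures.

Definition L_SE (R : realType) : set itrace -> rat -> Prop :=
  fun M q => ratr q < SE R M.
Definition L_ME (R : realType) : set itrace -> rat -> Prop :=
  fun M q => ratr q < ME R M.
Definition L_GE (R : realType) : set itrace -> rat -> Prop :=
  fun M q => ratr q < GE R M.

From Pilot Require Import Defs.
From HB Require Import structures.
From mathcomp Require Import all_boot all_order all_algebra.
From mathcomp Require Import all_classical all_reals.
From mathcomp Require Import exp.
From mathcomp Require Import zify ring lra.
Set Implicit Arguments. Unset Strict Implicit. Unset Printing Implicit Defensive.
Import Order.TTheory GRing.Theory Num.Theory.
Local Open Scope classical_set_scope.
Local Open Scope ring_scope.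

(* Extend every trace of an observation S by a constant tail that outputs an
   injective code of its high input, and use n inputs in total (those of S plus
   fresh ones).  The resulting program reveals its input: under the uniform
   prior H is a function of O, so SE = ME = log2 n and GE = (n - 1) / 2, which
   exceed any q once n is large. *)

Lemma sumr_const_seq (V : nmodType) (I : Type) (r : seq I) (x : V) :
  \sum_(i <- r) x = x *+ size r.
Proof. by rewrite big_const_seq count_predT iter_addr_0. Qed.

Lemma sum_iota1_mul2 n : ((\sum_(i <- iota 1 n) i) * 2 = n * n.+1)%N.
Proof.
elim: n => [|n IH]; first by rewrite big_nil.
have -> : iota 1 n.+1 = iota 1 n ++ [:: n.+1] by rewrite -[n.+1]addn1 iotaD add1n addn1.
rewrite big_cat big_seq1 /= mulnDl IH; lia.
Qed.

Lemma log2_1 (R : realType) : log2 (1 : R) = 0.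
Proof. by rewrite /log2 ln1 mul0r. Qed.

Lemma sup_eq_max (R : realType) (E : set R) x :
  E x -> ubound E x -> sup E = x.
Proof.
move=> Ex ubx; apply/le_anti/andP; split; first by apply: ge_sup => //; exists x.
by apply: sup_upper_bound => //; split; exists x.
Qed.

Lemma big_zip_iota_cst (R : pzSemiRingType) (I : Type) (r : seq I) m (c : R) :
  \sum_(k <- zip (iota m (size r)) r) k.1%:R * c = (\sum_(i <- iota m (size r)) i%:R) * c.
Proof.
rewrite -big_distrl; congr (_ * _).
by rewrite -[in RHS](@unzip1_zip _ _ (iota m (size r)) r) ?size_iota // big_map.
Qed.

Lemma big_zip_iota_pred1 (R : pzSemiRingType) (I : eqType) (r : seq I) m x :
  uniq r ->
  \sum_(k <- zip (iota m (size r)) r) k.1%:R * (k.2 == x)%:R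
    = (x \in r)%:R * (m + index x r)%:R :> R.
Proof.
elim: r m => [|a r IH] m /=; first by rewrite big_nil mul0r.
case/andP=> a_notin_r uniq_r; rewrite big_cons /= IH // in_cons.
have [<-|neq_ax] := eqVneq a x; last by rewrite mulr0 add0r addSnnS.
by rewrite (negbTE a_notin_r) mul0r addr0 mulr1 mul1r addn0.
Qed.

Section GuessingEntropy.
Variables (R : realType) (T : choiceType) (s : seq T).
Hypothesis uniq_s : uniq s.

Lemma guess_enum_xget (p : T -> R) :
  guess_enum [set` s] p (xget [::] (guess_enum [set` s] p)).
Proof.
apply: xgetPex; exists (sort (fun x y => p y <= p x) s).
split; first by rewrite sort_uniq.
split; first by apply/seteqP; split=> x /=; rewrite mem_sort.
by apply: sort_sorted => x y; exact: le_total.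
Qed.

Lemma guess_enum_perm (p : T -> R) s' : guess_enum [set` s] p s' -> perm_eq s s'.
Proof.
case=> uniq_s' [ss' _]; apply: uniq_perm => // x.
apply/idP/idP => xP.
  by have : [set` s'] x by rewrite ss'.
by have : [set` s] x by rewrite -ss'.
Qed.

Lemma guessG_cst (c : R) :
  guessG [set` s] (fun=> c) * 2 = c * (size s * (size s).+1)%:R.
Proof.
rewrite /guessG /=; have := guess_enum_xget (fun=> c).
set s' := xget _ _ => /guess_enum_perm /perm_size ->.
by rewrite big_zip_iota_cst -natr_sum mulrAC -natrM sum_iota1_mul2 mulrC.
Qed.

Lemma guessG_pred1 x : x \in s -> guessG [set` s] (fun y => (y == x)%:R : R) = 1.
Proof.
move=> xs; rewrite /guessG /=; have := guess_enum_xget (fun y => (y == x)%:R : R).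
set s' := xget _ _ => enum_s'; have perm_ss' := guess_enum_perm enum_s'.
case: enum_s' => uniq_s' [_ sorted_s'].
rewrite big_zip_iota_pred1 // -(perm_mem perm_ss') xs mul1r.
suff -> : index x s' = 0%N by [].
have : x \in s' by rewrite -(perm_mem perm_ss').
case: s' sorted_s' {uniq_s' perm_ss'} => [//|y r] /= path_yr.
have [//|neq_yx] := eqVneq y x; rewrite in_cons eq_sym (negbTE neq_yx) /= => xr.
(* every later entry has indicator at most that of the head y, which is 0 *)
have le_trans_rev : transitive (fun a b : T => (b == x)%:R <= (a == x)%:R :> R).
  by move=> a b c ba cb; exact: le_trans cb ba.
have /allP/(_ x xr) := order_path_min le_trans_rev path_yr.
by rewrite eqxx (negbTE neq_yx) ler_nat.
Qed.

End GuessingEntropy.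

Section RevealingProgram.
Variables (R : realType) (s : seq Defs.val) (T : Defs.val -> itrace).
Hypotheses (uniq_s : uniq s) (s_neq0 : s != [::]).
Hypothesis T_input : forall h, T h 0%N Hv = h.
Hypothesis T_reveals :
  {in s &, forall h h', ti_eq (out (T h)) (out (T h')) -> h = h'}.

Local Notation M := [set T h | h in [set` s]].
Local Notation n := (size s).

Lemma natr_size_neq0 : (n%:R : R) != 0.
Proof. by rewrite pnatr_eq0 size_eq0. Qed.

Lemma indom_reveal : indom M = [set` s].
Proof.
apply/seteqP; split=> [x [_ [h hs <-] <-]|x xs]; first by rewrite T_input.
by exists (T x); [exists x | rewrite T_input].
Qed.

Lemma outset_reveal : outset M = [set` map (fun h => out (T h)) s].
Proof.
apply/seteqP; split=> [x [_ [h hs <-] <-]|x /mapP[h hs ->]]; first exact: map_f.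
by exists (T h) => //; exists h.
Qed.

Lemma uniq_outputs_reveal : uniq (map (fun h => out (T h)) s).
Proof.
rewrite map_inj_in_uniq // => h h' hs h's eq_out; apply: T_reveals => //.
by rewrite eq_out => i; right; right.
Qed.

Lemma outputs_reveal h h' : h' \in s -> outputs M h (out (T h')) <-> h = h'.
Proof.
move=> h's; split=> [[_ [[h'' h''s <-] [<- ti]]]|->].
  by rewrite T_input; exact: T_reveals.
by exists (T h'); split; [exists h' | split=> // i; right; right].
Qed.

Lemma sum_outset_reveal (F : otrace -> R) :
  \sum_(o \in outset M) F o = \sum_(h <- s) F (out (T h)).
Proof. by rewrite outset_reveal -fsbig_seq ?uniq_outputs_reveal // big_map. Qed.

Lemma pH_reveal h : pH R M h = n%:R^-1.
Proof.
by rewrite /pH /ncard indom_reveal -fsbig_seq // sumr_const_seq div1r.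
Qed.

Lemma pHO_reveal h h' : h' \in s -> pHO R M h (out (T h')) = (h == h')%:R / n%:R.
Proof.
move=> h's; rewrite /pHO /ind pH_reveal; congr (_ * _).
have [->|neq_hh'] := eqVneq h h'; first by rewrite asboolT //; exact/outputs_reveal.
by rewrite asboolF // => /(outputs_reveal _ h's)/eqP; rewrite (negbTE neq_hh').
Qed.

Lemma pO_reveal h' : h' \in s -> pO R M (out (T h')) = n%:R^-1.
Proof.
move=> h's; rewrite /pO indom_reveal -fsbig_seq //.
under eq_bigr do rewrite pHO_reveal //.
rewrite -big_distrl /= (bigD1_seq h') //= eqxx big1 ?addr0 ?mul1r // => h.
by move/negbTE->.
Qed.

Lemma pHgO_reveal h h' : h' \in s -> pHgO R M h (out (T h')) = (h == h')%:R.
Proof.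
by move=> h's; rewrite /pHgO pHO_reveal // pO_reveal // invrK mulfVK ?natr_size_neq0.
Qed.

Lemma SE_reveal : SE R M = log2 n%:R.
Proof.
have shannonH_n : shannonH R M = log2 n%:R.
  rewrite /shannonH indom_reveal -fsbig_seq //.
  under eq_bigr do rewrite pH_reveal div1r invrK.
  by rewrite sumr_const_seq -mulrnAl -[_^-1 *+ _]mulr_natr mulVf ?natr_size_neq0 ?mul1r.
have shannonHgO_0 : shannonHgO R M = 0.
  rewrite /shannonHgO sum_outset_reveal big_seq big1 // => h' h's.
  rewrite indom_reveal -fsbig_seq // big1 ?mulr0 // => h _.
  by rewrite pHgO_reveal //; case: eqP => _; rewrite ?divr1 ?log2_1 ?mulr0 ?mul0r.
by rewrite /SE shannonH_n shannonHgO_0 subr0.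
Qed.

Lemma ME_reveal : ME R M = log2 n%:R.
Proof.
have vulnH_n : vulnH R M = n%:R^-1.
  rewrite /vulnH indom_reveal; apply: sup_eq_max => [|_ [h _ <-]].
    have [h0 h0s] : exists h0, h0 \in s.
      by case: (s) s_neq0 => [//|h r _]; exists h; exact: mem_head.
    by exists h0; rewrite ?pH_reveal.
  by rewrite pH_reveal.
have vulnHgO_1 : vulnHgO R M = 1.
  rewrite /vulnHgO sum_outset_reveal big_seq.
  under eq_bigr => h' h's.
    rewrite pO_reveal // indom_reveal (@sup_eq_max _ _ 1); first over.
      by exists h' => //; rewrite pHgO_reveal // eqxx.
    by move=> _ [h _ <-]; rewrite pHgO_reveal //; case: eqP.
  by rewrite -big_seq sumr_const_seq mulr1 -[_^-1 *+ _]mulr_natr mulVf ?natr_size_neq0.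
by rewrite /ME vulnH_n vulnHgO_1 div1r invrK div1r invr1 log2_1 subr0.
Qed.

Lemma GE_reveal : GE R M = (n%:R - 1) / 2.
Proof.
have guessH_n : guessH R M * 2 = n%:R + 1.
  rewrite /guessH indom_reveal.
  have -> : pH R M = fun=> n%:R^-1 by apply: funext => h; exact: pH_reveal.
  by rewrite guessG_cst // natrM mulKf ?natr_size_neq0 // -addn1 natrD.
have guessHgO_1 : guessHgO R M = 1.
  rewrite /guessHgO indom_reveal sum_outset_reveal big_seq.
  under eq_bigr => h' h's.
    have -> : (fun h => pHgO R M h (out (T h'))) = (fun h => (h == h')%:R).
      by apply: funext => h; rewrite pHgO_reveal.
    rewrite guessG_pred1 // pO_reveal // mulr1; over.
  by rewrite -big_seq sumr_const_seq -[_^-1 *+ _]mulr_natr mulVf ?natr_size_neq0.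
apply: (mulIf (x := 2)); first by rewrite pnatr_eq0.
by rewrite /GE mulrBl guessH_n guessHgO_1 mulfVK ?pnatr_eq0 //; ring.
Qed.

End RevealingProgram.

Section Extension.
Variable S : set ftrace.
Hypothesis obs_S : is_obs S.

Definition head_input (t : ftrace) : Defs.val := if t is s0 :: _ then s0 Hv else None.

(* [code] is injective and never [None], so a tail of [tail_store h] outputs
   [h] itself, also across the termination-insensitive comparison [ti_eq]. *)
Definition code (h : Defs.val) : nat := if h is Some m then m.+1 else 0%N.

Definition tail_store (h : Defs.val) : store :=
  fun v => if v == Hv then h else Some (code h).

Definition prefix_of (h : Defs.val) : ftrace :=
  xget [::] [set t | S t /\ t <> [::] /\ head_input t = h].

Definition extend (h : Defs.val) : itrace :=
  tcat (prefix_of h) (fun=> tail_store h).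

Lemma extend_input h : extend h 0%N Hv = h.
Proof.
rewrite /extend /tcat /prefix_of.
by case: xgetP => [[//|s0 r] _ [_ [_ <-]]|].
Qed.

Lemma out_extend h i : (size (prefix_of h) <= i)%N -> out (extend h) i = Some (code h).
Proof. by move=> le_i; rewrite /out /extend /tcat nth_default //; exact: leqW. Qed.

Lemma extend_reveals h h' : ti_eq (out (extend h)) (out (extend h')) -> h = h'.
Proof.
move=> /(_ (maxn (size (prefix_of h)) (size (prefix_of h')))).
rewrite !out_extend ?leq_maxl ?leq_maxr //.
by case=> [//|[//|[]]]; case: h => [a|]; case: h' => [b|] //= [->].
Qed.

Lemma prefix_of_head s0 r : S (s0 :: r) -> prefix_of (s0 Hv) = s0 :: r.
Proof.
move=> S_t; have : [set t | S t /\ t <> [::] /\ head_input t = s0 Hv] (s0 :: r) by [].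
move=> /(xgetI [::]); rewrite -/(prefix_of _).
case: (prefix_of _) => [|s1 r1] [S_p [nonempty eq_H]]; first by case: nonempty.
exact: (obs_S.2 _ _ _ _ _ _ S_p S_t erefl erefl eq_H).
Qed.

Lemma extend_program (s : seq Defs.val) :
  s != [::] -> head_input @` S `<=` [set` s] ->
  is_program [set extend h | h in [set` s]] /\ obs_le S [set extend h | h in [set` s]].
Proof.
move=> s_neq0 heads_s; have [h0 h0s] : exists h0, h0 \in s.
  by case: (s) s_neq0 => [//|h r _]; exists h; exact: mem_head.
split; first split.
- by move=> _ _ [h1 _ <-] [h2 _ <-]; rewrite !extend_input => ->.
- rewrite (indom_reveal _ extend_input); split; first exact: finite_seq.
  by exists h0.
- case=> [|s0 r] S_t.
    exists (extend h0); suff -> : tcat [::] (extend h0) = extend h0 by exists h0.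
    by apply: funext => i; rewrite /tcat nth_nil subn0.
  exists (fun=> tail_store (s0 Hv)); exists (s0 Hv); first by apply: heads_s; exists (s0 :: r).
  by rewrite /extend (prefix_of_head S_t).
Qed.

Lemma fresh_inputs K : exists s : seq Defs.val,
  [/\ uniq s, (K < size s)%N & head_input @` S `<=` [set` s]].
Proof.
have /finite_seqP[e heads_e] : finite_set (head_input @` S).
  exact: finite_image obs_S.1.
exists (undup (e ++ map Some (iota 0 K.+1))); split; first exact: undup_uniq.
  rewrite -{1}[K.+1](size_iota 0) -(size_map Some); apply: uniq_leq_size.
    by rewrite map_inj_uniq ?iota_uniq // => a b [].
  by move=> x xP; rewrite mem_undup mem_cat xP orbT.
by rewrite heads_e => x /= xe; rewrite mem_undup mem_cat xe.
Qed.

End Extension.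

Lemma nat_log2_half_gt (R : realType) (x : R) : exists K, forall n,
  (K < n)%N -> x < log2 (n%:R : R) /\ x < (n%:R - 1) / 2.
Proof.
have /archi_boundP : 0 <= 2 * `|x| + 1 by rewrite addr_ge0 ?mulr_ge0.
set k := Num.bound _ => lt_k; have le_x := ler_norm x; have ge0_x := normr_ge0 x.
exists (2 ^ k)%N => n lt_n.
have lt_kn : (k < n)%N by apply: leq_trans lt_n; rewrite ltnS ltnW // ltn_expl.
have ln2_gt0 : 0 < ln (2 : R) by apply: ln_gt0; rewrite ltr1n.
split.
  apply: (@lt_le_trans _ _ k%:R); first lra.
  rewrite /log2 ler_pdivlMr // mulrC mulr_natr -lnXn ?ltr0n //.
  rewrite ler_ln ?posrE ?exprn_gt0 ?ltr0n ?(leq_trans _ lt_kn) //.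
  by rewrite -natrX ler_nat ltnW.
have : (k%:R : R) + 1 <= n%:R by rewrite natr1 ler_nat.
by rewrite ltr_pdivlMr //; lra.
Qed.

Theorem theorem2 (R : realType) :
  liveness_q (@L_SE R) /\ liveness_q (@L_ME R) /\ liveness_q (@L_GE R).
Proof.
have leaky q S : is_obs S -> exists M, [/\ is_program M, obs_le S M &
    [/\ ratr q < SE R M, ratr q < ME R M & ratr q < GE R M]].
  move=> obs_S; have [K gt_q] := nat_log2_half_gt (ratr q : R).
  have [s [uniq_s lt_Ks heads_s]] := fresh_inputs obs_S K.
  have s_neq0 : s != [::] by rewrite -size_eq0 -lt0n (leq_ltn_trans _ lt_Ks).
  have [prog_M le_SM] := extend_program obs_S s_neq0 heads_s.
  have reveals : {in s &, forall h h', ti_eq (out (extend S h)) (out (extend S h')) -> h = h'}.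
    by move=> h h' _ _; exact: extend_reveals.
  have [gt_log gt_half] := gt_q _ lt_Ks.
  exists [set extend S h | h in [set` s]]; split => //.
  by rewrite SE_reveal ?ME_reveal ?GE_reveal //; exact: extend_input.
by split; [|split] => q S /(leaky q)[M [? ? [? ? ?]]]; exists M.
Qed.
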